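(* Let $k,r\in\mathbb N$ with $r\ge2$, let $s_1,\dots,s_r\in\mathbb N$ with $s_i\le k$, let $H_1,\dots,H_r$ be graphs with $1\le v(H_i)\le s_i$, and let $N\in\mathbb N$ with $N\ge r^{C(k+t)}$, where $t=\sum_i s_i$. Let $\mathbf H=(H_i)$, $\mathbf s=(s_i)$. Then for every graph $G$ on $N$ vertices with $G\in\mathcal B'(\mathbf H)\cap\mathcal E(\mathbf s)$ and every $(S,c)\in\mathbf S(G)$, the hypergraph $\mathfrak I_{H_i^-,G_i,G}[W]$ is $(p,p|W|)$-Janson for every $i\in[r]$ and every $W\subset S$ with $|W|\ge\delta N/(8r)$.
   Context: Constants: $C=300$, $\delta=r^{-50}$, $p=\frac1{2^{25}k^2r^4}$. $H_i^-$ is the graph obtained from $H_i$ by deleting a vertex. Hypergraphs are identified with their edge sets; $\mathcal G[W]=\{E\in\mathcal G:E\subset W\}$. For $\nu:\mathcal G\to\mathbb R_{\ge0}$: $e(\nu)=\sum_E\nu(E)$, $d_\nu(L)=\sum_{E\in\mathcal G,L\subset E}\nu(E)$, $\Lambda_p(\nu)=\sum_{L\subset V(\mathcal G),|L|\ge2}d_\nu(L)^2p^{-|L|}$; for $R>0$, $\mathcal G$ is $(p,R)$-Janson if some $\nu$ has $\Lambda_p(\nu)<e(\nu)^2/R$. For graphs $F,G$ and $G'\subset G$, $\mathfrak I_{F,G',G}$ is the hypergraph on $V(G)$ with edges the sets $L$ with $G'[L]=G[L]\cong F$. For a colouring $c$ with colours in $[r]$, $G_i$ is the subgraph of edges of colour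 $i$. $\mathcal E(\mathbf s)$: graphs $G$ such that for all $t'<t$, all graphs $F_1,\dots,F_r$ with $v(F_i)\le s_i$ and $\sum v(F_i)=t'$, every $W\subset V(G)$ with $|W|\ge(\delta/(8r))^{t-t'}v(G)$ and every $c:E(G[W])\to[r]$, some $\mathfrak I_{F_i,G_i,G}[W]$ is $(p,p|W|)$-Janson. $\mathcal B'(\mathbf H)$: graphs $G$ for which there are $S\subset V(G)$ with $|S|\ge\delta^{2/3}v(G)$ and $c:E(G[S])\to[r]$ with $\mathfrak I_{H_i,G_i,G}[S]$ not $(p,2^{-9}r^{-1}\delta p\,v(G))$-Janson for all $i$. $\mathbf S(G)$: the set of pairs $(S,c)$ with $S\subset V(G)$, $|S|\ge\delta^{2/3}N$, $c:E(G[S])\to[r]$, such that $\mathfrak I_{H_i,G_i,G}[S]$ is not $(p,2^{-9}r^{-1}\delta pN)$-Janson for every $i\in[r]$. *)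

From HB Require Import structures.
From mathcomp Require Import all_boot all_order all_algebra.
From mathcomp Require Import reals.
Set Implicit Arguments. Unset Strict Implicit. Unset Printing Implicit Defensive.
Import Order.TTheory GRing.Theory Num.Theory.
Local Open Scope ring_scope.

Definition is_graph (U : finType) (F : rel U) : Prop :=
  symmetric F /\ irreflexive F.

Definition copy_hg (U T : finType) (F : rel U) (G' G : rel T) : {set {set T}} :=
  [set L : {set T} |
     [forall x in L, forall y in L, G' x y == G x y] &&
     [exists f : {ffun U -> T},
        [&& injectiveb f, [set f u | u : U] == L &
            [forall a : U, forall b : U, F a b == G (f a) (f b)]]]].

Definition hg_on (T : finType) (Hg : {set {set T}}) (W : {set T}) : {set {set T}} :=
  [set E in Hg | E \subset W].

Definition e_nu (R : realType) (T : finType) (Hg : {set {set T}}) (nu : {set T} -> R) : R :=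
  \sum_(E in Hg) nu E.

Definition d_nu (R : realType) (T : finType) (Hg : {set {set T}}) (nu : {set T} -> R)
  (L : {set T}) : R :=
  \sum_(E in Hg | L \subset E) nu E.

Definition Lambda (R : realType) (T : finType) (p : R) (Hg : {set {set T}})
  (nu : {set T} -> R) : R :=
  \sum_(L : {set T} | (1 < #|L|)%N) (d_nu Hg nu L) ^+ 2 / p ^+ #|L|.

(* (p,Rr)-Janson; nu is only relevant on the edges of Hg. *)
Definition janson (R : realType) (T : finType) (p Rr : R) (Hg : {set {set T}}) : Prop :=
  exists nu : {set T} -> R,
    (forall E, E \in Hg -> 0 <= nu E) /\
    Lambda p Hg nu < (e_nu Hg nu) ^+ 2 / Rr.

Definition p_const (R : realType) (k r : nat) : R :=
  ((2 ^ 25 * k ^ 2 * r ^ 4)%N%:R)^-1.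
Definition delta (R : realType) (r : nat) : R := (r%:R ^+ 50)^-1.

(* Colour class i of a colouring c of the edges of G[S] (edges seen as
   2-element vertex sets): spanning subgraph of G. *)
Definition colg (T : finType) (r : nat) (G : rel T) (S : {set T})
  (c : {set T} -> 'I_r) (i : 'I_r) : rel T :=
  fun x y => [&& G x y, x \in S, y \in S & c [set x; y] == i].

Definition del_vertex (n : nat) (F : rel 'I_n) (v : 'I_n) : rel {x : 'I_n | x != v} :=
  fun a b => F (val a) (val b).
Arguments del_vertex {n} F v.

Definition in_E (R : realType) (k r : nat) (s : 'I_r -> nat) (N : nat)
  (G : rel 'I_N) : Prop :=
  forall (t' : nat), (t' < \sum_(i < r) s i)%N ->
  forall (nF : 'I_r -> nat) (F : forall i : 'I_r, rel 'I_(nF i)),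
    (forall i, is_graph (F i)) -> (forall i, nF i <= s i)%N ->
    (\sum_(i < r) nF i)%N = t' ->
  forall W : {set 'I_N},
    (delta R r / (8 * r)%N%:R) ^+ (\sum_(i < r) s i - t')%N * N%:R <= #|W|%:R ->
  forall c : {set 'I_N} -> 'I_r,
  exists i : 'I_r,
    janson (p_const R k r) (p_const R k r * #|W|%:R)
      (hg_on (copy_hg (F i) (colg G W c i) G) W).

(* (S,c) in S(G).  |S| >= delta^(2/3) N is written as |S|^3 >= delta^2 N^3. *)
Definition in_SG (R : realType) (k r : nat) (nH : 'I_r -> nat)
  (H : forall i : 'I_r, rel 'I_(nH i)) (N : nat) (G : rel 'I_N)
  (S : {set 'I_N}) (c : {set 'I_N} -> 'I_r) : Prop :=
  delta R r ^+ 2 * N%:R ^+ 3 <= #|S|%:R ^+ 3 /\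
  forall i : 'I_r,
    ~ janson (p_const R k r)
        ((2 ^ 9)%N%:R^-1 * r%:R^-1 * delta R r * p_const R k r * N%:R)
        (hg_on (copy_hg (H i) (colg G S c i) G) S).

Definition in_B' (R : realType) (k r : nat) (nH : 'I_r -> nat)
  (H : forall i : 'I_r, rel 'I_(nH i)) (N : nat) (G : rel 'I_N) : Prop :=
  exists S c, in_SG R k H G S c.

From mathcomp Require Import all_boot all_order all_algebra.
From mathcomp Require Import reals.
From mathcomp Require Import ring.
Set Implicit Arguments. Unset Strict Implicit. Unset Printing Implicit Defensive.
Import Order.TTheory GRing.Theory Num.Theory.
Local Open Scope ring_scope.

(* Delete v from H_i and keep every other H_j. This family has t' < t
   vertices in total, and |W| >= delta N / (8 r) >= (delta / (8 r))^(t - t') N,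
   so G in E(s) yields a colour j whose copies of the j-th graph inside W form
   a (p, p|W|)-Janson hypergraph. For j = i this is the claim. For j <> i the
   copies of H_j are then Janson inside the larger set S, at a parameter
   p|W| >= p delta N / (8 r) above the threshold 2^-9 r^-1 delta p N, which
   contradicts (S, c) in S(G). *)

Definition sub_graph (U : finType) (P : pred U) (F : rel U) : rel {x : U | P x} :=
  fun a b => F (val a) (val b).
Arguments sub_graph {U} P F.

Definition ord_graph (U : finType) (F : rel U) : rel 'I_#|U| :=
  fun a b => F (enum_val a) (enum_val b).

Lemma is_graph_sub_graph (U : finType) (P : pred U) (F : rel U) :
  is_graph F -> is_graph (sub_graph P F).
Proof. by move=> [F_sym F_irr]; split=> [a b|a]; [exact: F_sym | exact: F_irr]. Qed.

Lemma is_graph_ord_graph (U : finType) (F : rel U) :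
  is_graph F -> is_graph (ord_graph F).
Proof. by move=> [F_sym F_irr]; split=> [a b|a]; [exact: F_sym | exact: F_irr]. Qed.

Section CopyHypergraph.
Variables (T : finType) (G' G : rel T).

Lemma copy_hg_subset_iso (U U' : finType) (F : rel U) (F' : rel U') (g : U' -> U) :
  bijective g -> (forall a b, F' a b = F (g a) (g b)) ->
  copy_hg F G' G \subset copy_hg F' G' G.
Proof.
move=> [h gK hK] eF; apply/subsetP => L; rewrite !inE => /andP[-> /existsP[f]].
case/and3P=> /injectiveP f_inj /eqP fL /forallP f_hom.
apply/existsP; exists [ffun a => f (g a)]; apply/and3P; split.
- by apply/injectiveP => x y; rewrite !ffunE => /f_inj /(can_inj gK).
- apply/eqP; rewrite -fL; apply/setP => y; apply/imsetP/imsetP => -[u _ ->].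
    by exists (g u) => //; rewrite ffunE.
  by exists (h u) => //; rewrite ffunE hK.
- apply/forallP => a; apply/forallP => b; rewrite !ffunE eF.
  exact: forallP (f_hom (g a)) (g b).
Qed.

Lemma copy_hg_iso (U U' : finType) (F : rel U) (F' : rel U') (g : U' -> U) :
  bijective g -> (forall a b, F' a b = F (g a) (g b)) ->
  copy_hg F' G' G = copy_hg F G' G.
Proof.
move=> g_bij eF; have [h gK hK] := g_bij.
apply/eqP; rewrite eqEsubset (copy_hg_subset_iso g_bij eF) andbT.
by apply: (copy_hg_subset_iso (g := h)) => [|a b]; [exists g | rewrite eF !hK].
Qed.

Lemma copy_hg_ord_graph (U : finType) (F : rel U) :
  copy_hg (ord_graph F) G' G = copy_hg F G' G.
Proof. exact: copy_hg_iso (enum_val_bij U) _. Qed.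

Lemma copy_hg_sub_graphT (U : finType) (P : pred U) (F : rel U) :
  (forall x, P x) -> copy_hg (sub_graph P F) G' G = copy_hg F G' G.
Proof.
move=> PT; apply: (copy_hg_iso (g := val)) => //.
by exists (fun x => exist P x (PT x)) => // a; apply: val_inj.
Qed.

Lemma copy_hg_sub_graph_eq (U : finType) (P Q : pred U) (F : rel U) :
  P =1 Q -> copy_hg (sub_graph P F) G' G = copy_hg (sub_graph Q F) G' G.
Proof.
move=> PQ; have PQ' x : P x -> Q x by rewrite PQ.
have QP x : Q x -> P x by rewrite PQ.
apply: (copy_hg_iso (g := fun a => exist Q (val a) (PQ' _ (valP a)))) => //.
by exists (fun b => exist P (val b) (QP _ (valP b))) => ?; apply: val_inj.
Qed.

End CopyHypergraph.

Lemma hg_onS (T : finType) (Hg : {set {set T}}) (W S : {set T}) :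
  W \subset S -> hg_on Hg W \subset hg_on Hg S.
Proof.
move=> WS; apply/subsetP => E; rewrite !inE => /andP[-> EW].
exact: subset_trans EW WS.
Qed.

Lemma hg_on_copy_colg (U T : finType) (r : nat) (F : rel U) (G : rel T)
    (S W : {set T}) (c : {set T} -> 'I_r) (j : 'I_r) :
  W \subset S ->
  hg_on (copy_hg F (colg G W c j) G) W = hg_on (copy_hg F (colg G S c j) G) W.
Proof.
move=> WS; apply/setP => E; rewrite !inE.
case EW: (E \subset W); rewrite ?andbF ?andbT //; congr andb.
apply: eq_forallb_in => x xE; apply: eq_forallb_in => y yE.
have [xW yW] := (subsetP EW x xE, subsetP EW y yE).
by rewrite /colg xW yW (subsetP WS x xW) (subsetP WS y yW).
Qed.

Section Janson.
Variables (R : realType) (T : finType) (p : R).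

Lemma janson_le (R1 R2 : R) (Hg : {set {set T}}) :
  0 < R2 -> R2 <= R1 -> janson p R1 Hg -> janson p R2 Hg.
Proof.
move=> R2_gt0 R21 [nu [nu_ge0 lt_nu]]; exists nu; split=> //.
apply: (lt_le_trans lt_nu); rewrite ler_wpM2l ?sqr_ge0 // lef_pV2 ?posrE //.
exact: lt_le_trans R21.
Qed.

Lemma janson_subset (Rr : R) (Hg1 Hg2 : {set {set T}}) :
  Hg1 \subset Hg2 -> janson p Rr Hg1 -> janson p Rr Hg2.
Proof.
move=> sub12 [nu [nu_ge0 lt_nu]].
pose nu' E := if E \in Hg1 then nu E else 0.
have nu'_in E : (if E \in Hg2 then nu' E else 0) = nu' E.
  by rewrite /nu'; case: (boolP (E \in Hg1)) => [/(subsetP sub12)->|_]; rewrite ?if_same.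
have e_eq : e_nu Hg2 nu' = e_nu Hg1 nu.
  by rewrite /e_nu big_mkcond [RHS]big_mkcond; apply: eq_bigr => E _; apply: nu'_in.
have d_eq L : d_nu Hg2 nu' L = d_nu Hg1 nu L.
  by rewrite /d_nu big_mkcondl [RHS]big_mkcondl; apply: eq_bigr => E _; apply: nu'_in.
have Lambda_eq : Lambda p Hg2 nu' = Lambda p Hg1 nu.
  by apply: eq_bigr => L _; rewrite d_eq.
exists nu'; split; last by rewrite Lambda_eq e_eq.
by move=> E _; rewrite /nu'; case: ifP => // /nu_ge0.
Qed.

End Janson.

Lemma delta_gt0 (R : realType) (r : nat) : (0 < r)%N -> 0 < delta R r.
Proof. by move=> r_gt0; rewrite /delta invr_gt0 exprn_gt0 // ltr0n. Qed.

Lemma delta_le1 (R : realType) (r : nat) : (0 < r)%N -> delta R r <= 1.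
Proof.
by move=> r_gt0; rewrite /delta invf_le1 ?exprn_gt0 ?ltr0n // exprn_ege1 // ler1n.
Qed.

Lemma p_const_gt0 (R : realType) (k r : nat) :
  (0 < k)%N -> (0 < r)%N -> 0 < p_const R k r.
Proof. by move=> k_gt0 r_gt0; rewrite /p_const invr_gt0 ltr0n !muln_gt0 k_gt0 r_gt0. Qed.

Lemma delta_threshold_expr_le (R : realType) (r N m : nat) (w : R) :
  (0 < r)%N -> (0 < m)%N -> delta R r * N%:R / (8 * r)%N%:R <= w ->
  (delta R r / (8 * r)%N%:R) ^+ m * N%:R <= w.
Proof.
move=> r_gt0 m_gt0; apply: le_trans; rewrite mulrAC ler_wpM2r ?ler0n //.
have d_gt0 := delta_gt0 R r_gt0; have r8_gt0 : (0 < 8 * r)%N by rewrite muln_gt0.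
apply: ler_iXnr => //; first by rewrite divr_ge0 ?ler0n ?ltW.
rewrite ler_pdivrMr ?ltr0n // mul1r; apply: le_trans (delta_le1 R r_gt0) _.
by rewrite ler1n.
Qed.

Lemma janson_SG_threshold (R : realType) (T : finType) (k r N : nat) (w : R)
    (Hg : {set {set T}}) :
  (0 < k)%N -> (0 < r)%N -> (0 < N)%N -> delta R r * N%:R / (8 * r)%N%:R <= w ->
  janson (p_const R k r) (p_const R k r * w) Hg ->
  janson (p_const R k r)
    ((2 ^ 9)%N%:R^-1 * r%:R^-1 * delta R r * p_const R k r * N%:R) Hg.
Proof.
move=> k_gt0 r_gt0 N_gt0 w_large.
have d_gt0 := delta_gt0 R r_gt0; have p_gt0 := p_const_gt0 R k_gt0 r_gt0.
set X := r%:R^-1 * delta R r * p_const R k r * N%:R.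
have X_gt0 : 0 < X by rewrite /X !mulr_gt0 // ?invr_gt0 ltr0n.
have -> : (2 ^ 9)%:R^-1 / r%:R * delta R r * p_const R k r * N%:R = X / 512%:R.
  by rewrite /X (_ : (2 ^ 9)%N = 512%N) //; ring.
apply: janson_le; first by rewrite divr_gt0 ?ltr0n.
apply: le_trans (ler_wpM2l (ltW p_gt0) w_large).
have -> : p_const R k r * (delta R r * N%:R / (8 * r)%N%:R) = X / 8%:R.
  by rewrite /X natrM invfM; ring.
by rewrite ler_pM2l // lef_pV2 ?posrE ?ltr0n // ler_nat.
Qed.

Lemma ltn_sum_at (I : finType) (i : I) (F G : I -> nat) :
  (forall j, F j <= G j)%N -> (F i < G i)%N -> (\sum_j F j < \sum_j G j)%N.
Proof.
move=> FG Fi_lt; rewrite (bigD1 i) // [X in (_ < X)%N](bigD1 i) //= -addSn.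
by apply: leq_add => //; apply: leq_sum.
Qed.

Section DeleteVertexFamily.
Variables (r : nat) (nH : 'I_r -> nat) (H : forall j : 'I_r, rel 'I_(nH j)).
Variables (i : 'I_r) (v : 'I_(nH i)).
Arguments H : clear implicits.

(* One predicate for every j, so that v is never transported along j = i. *)
Definition keep_vertex (j : 'I_r) : pred 'I_(nH j) :=
  fun x => (j != i) || (val x != val v).
Arguments keep_vertex : clear implicits.

Definition del_family_size (j : 'I_r) : nat := #|{: {x : 'I_(nH j) | keep_vertex j x}}|.

Definition del_family (j : 'I_r) : rel 'I_(del_family_size j) :=
  ord_graph (sub_graph (keep_vertex j) (H j)).
Arguments del_family : clear implicits.

Lemma del_family_size_eq : del_family_size i = (nH i).-1.
Proof.
rewrite /del_family_size card_sig -[in RHS](card_ord (nH i)) -(cardC1 v).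
by apply: eq_card => x; rewrite !inE /keep_vertex eqxx val_eqE.
Qed.

Lemma del_family_size_neq (j : 'I_r) : j != i -> del_family_size j = nH j.
Proof.
move=> j_neq_i; rewrite /del_family_size card_sig -[in RHS](card_ord (nH j)).
by apply: eq_card => x; rewrite !inE /keep_vertex j_neq_i.
Qed.

Lemma del_family_size_le (j : 'I_r) : (del_family_size j <= nH j)%N.
Proof.
have [->|j_neq_i] := eqVneq j i; last by rewrite del_family_size_neq.
by rewrite del_family_size_eq leq_pred.
Qed.

Lemma sum_del_family_size_lt (s : 'I_r -> nat) :
  (0 < nH i)%N -> (forall j, nH j <= s j)%N ->
  (\sum_j del_family_size j < \sum_j s j)%N.
Proof.
move=> nH_gt0 nH_le_s; apply: (ltn_sum_at (i := i)) => [j|].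
  exact: leq_trans (del_family_size_le j) (nH_le_s j).
by rewrite del_family_size_eq; apply: leq_trans (nH_le_s i); rewrite prednK.
Qed.

Lemma is_graph_del_family :
  (forall j, is_graph (H j)) -> forall j, is_graph (del_family j).
Proof. by move=> H_graph j; apply/is_graph_ord_graph/is_graph_sub_graph. Qed.

Lemma copy_hg_del_family_eq (T : finType) (G' G : rel T) :
  copy_hg (del_family i) G' G = copy_hg (del_vertex (H i) v) G' G.
Proof.
rewrite copy_hg_ord_graph (@copy_hg_sub_graph_eq _ _ _ _ _ (fun x => x != v)) //.
by move=> x; rewrite /keep_vertex eqxx val_eqE.
Qed.

Lemma copy_hg_del_family_neq (T : finType) (G' G : rel T) (j : 'I_r) :
  j != i -> copy_hg (del_family j) G' G = copy_hg (H j) G' G.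
Proof.
move=> j_neq_i; rewrite copy_hg_ord_graph copy_hg_sub_graphT // => x.
by rewrite /keep_vertex j_neq_i.
Qed.

End DeleteVertexFamily.

Theorem lemma6p5 (R : realType) (k r : nat) (s : 'I_r -> nat) (nH : 'I_r -> nat)
  (H : forall i : 'I_r, rel 'I_(nH i)) (N : nat) (G : rel 'I_N) :
  (2 <= r)%N ->
  (forall i, s i <= k)%N ->
  (forall i, is_graph (H i)) ->
  (forall i, 1 <= nH i <= s i)%N ->
  (r ^ (300 * (k + \sum_(i < r) s i)) <= N)%N ->
  is_graph G ->
  in_B' R k H G ->
  in_E R k s G ->
  forall (S : {set 'I_N}) (c : {set 'I_N} -> 'I_r), in_SG R k H G S c ->
  forall (i : 'I_r) (v : 'I_(nH i)) (W : {set 'I_N}),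
    W \subset S ->
    delta R r * N%:R / (8 * r)%N%:R <= #|W|%:R ->
    janson (p_const R k r) (p_const R k r * #|W|%:R)
      (hg_on (copy_hg (del_vertex (H i) v) (colg G S c i) G) W).
Proof.
move=> r_ge2 s_le_k H_graph nH_bounds N_large _ _ G_in_E S c [_ S_not_janson].
move=> i v W W_sub_S W_large.
have nH_gt0 j : (0 < nH j)%N by case/andP: (nH_bounds j).
have nH_le_s j : (nH j <= s j)%N by case/andP: (nH_bounds j).
have r_gt0 : (0 < r)%N by apply: leq_trans r_ge2.
have k_gt0 : (0 < k)%N := leq_trans (leq_trans (nH_gt0 i) (nH_le_s i)) (s_le_k i).
have N_gt0 : (0 < N)%N by apply: leq_trans N_large; rewrite expn_gt0 r_gt0.
have size_lt := sum_del_family_size_lt v (nH_gt0 i) nH_le_s.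
have size_le_s j := leq_trans (del_family_size_le v j) (nH_le_s j).
have W_large' := delta_threshold_expr_le r_gt0 (etrans (subn_gt0 _ _) size_lt) W_large.
have [j] := G_in_E _ size_lt _ _ (is_graph_del_family v H_graph) size_le_s erefl
  W W_large' c.
rewrite (hg_on_copy_colg _ _ _ _ W_sub_S).
have [j_eq_i|j_neq_i] := eqVneq j i; first by subst j; rewrite copy_hg_del_family_eq.
rewrite copy_hg_del_family_neq // => W_janson; exfalso; apply: (S_not_janson j).
apply: janson_SG_threshold k_gt0 r_gt0 N_gt0 W_large _.
exact: janson_subset (hg_onS _ W_sub_S) W_janson.
Qed.
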